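(* If $G$ is a connected block graph, then $\mu_t(G)=|\mathcal{S}(G)|=n(G)-|\mathcal{P}(G)|$.
   Context: All graphs are finite, simple and undirected; $n(G)$ denotes the order of $G$ and $N_G[v]$ the closed neighborhood of $v$. A block graph is a graph in which every block (maximal 2-connected subgraph or bridge) is a complete graph. Let $G$ be a connected graph and $X\subseteq V(G)$. Two vertices $x,y\in V(G)$ are $X$-visible if there exists a shortest $x,y$-path in $G$ none of whose internal vertices belongs to $X$. The set $X$ is a total mutual-visibility set of $G$ if every two vertices of $G$ are $X$-visible (the empty set is allowed). The total mutual-visibility number $\mu_t(G)$ is the maximum cardinality of a total mutual-visibility set of $G$. A vertex is simplicial if its neighbors induce a complete graph; $\mathcal{S}(G)$ is the set of simplicial vertices. $\mathcal{P}(G)$ is the set of vertices $v$ for which there exist two distinct vertices $u,w\in V(G)$ with $N_G[u]\cap N_G[w]=\{v\}$. *)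

(* a finite simple graph is a symmetric irreflexive relation
   e : rel T on a finType T (vertex set = all of T). *)
From mathcomp Require Import all_boot.
Set Implicit Arguments. Unset Strict Implicit. Unset Printing Implicit Defensive.

Section Graphs.
Variables (T : finType) (e : rel T).

Definition simple_graph : Prop := symmetric e /\ irreflexive e.

Definition connected_graph : Prop := forall x y : T, connect e x y.

Definition induced_rel (B : {set T}) : rel T :=
  [rel x y | [&& e x y, x \in B & y \in B]].

Definition connected_in (B : {set T}) : Prop :=
  forall x y, x \in B -> y \in B -> connect (induced_rel B) x y.

Definition nonseparable (B : {set T}) : Prop :=
  B != set0 /\ connected_in B /\ forall v, v \in B -> connected_in (B :\ v).

Definition is_block (B : {set T}) : Prop :=
  nonseparable B /\ forall B', nonseparable B' -> B \subset B' -> B' = B.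

Definition is_clique (B : {set T}) : Prop :=
  forall x y, x \in B -> y \in B -> x != y -> e x y.

Definition block_graph : Prop := forall B, is_block B -> is_clique B.

(* x :: p is a walk from x to y *)
Definition walk (x y : T) (p : seq T) : Prop := path e x p /\ last x p = y.

(* x :: p is a shortest x,y-path (length = size p) *)
Definition shortest_path (x y : T) (p : seq T) : Prop :=
  walk x y p /\ forall q, walk x y q -> size p <= size q.

(* internal vertices of the path x :: p *)
Definition internal (x : T) (p : seq T) : seq T := behead (belast x p).

Definition visible (X : {set T}) (x y : T) : Prop :=
  exists p, shortest_path x y p /\ all (fun v => v \notin X) (internal x p).

Definition total_mutual_visibility_set (X : {set T}) : Prop :=
  forall x y : T, visible X x y.

Definition mu_t_is (k : nat) : Prop :=
  (exists X : {set T}, total_mutual_visibility_set X /\ #|X| = k) /\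
  (forall X : {set T}, total_mutual_visibility_set X -> #|X| <= k).

Definition simplicial (v : T) : bool :=
  [forall u, forall w, (e v u && e v w && (u != w)) ==> e u w].

Definition simplicial_set : {set T} := [set v | simplicial v].

Definition closed_nbhd (v : T) : {set T} := [set u | (u == v) || e v u].

Definition P_set : {set T} :=
  [set v | [exists u, exists w,
     (u != w) && (closed_nbhd u :&: closed_nbhd w == [set v])]].

End Graphs.

(* Both inclusions rest on two facts.  First, an internal vertex of a shortest
   path is never simplicial (its two path neighbours are distinct and
   non-adjacent), so the simplicial vertices form a total mutual-visibility set
   in any connected graph.  Second, in a block graph two distinct non-adjacent
   vertices have at most one common neighbour, since two common neighbours
   would span a 4-cycle, which is nonseparable, hence inside a block, hence a
   clique.  Thus a non-simplicial vertex v, the middle of an induced path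
   u v w, is the unique vertex of N[u] :&: N[w] (so v is in P(G)) and lies on
   the unique shortest u,w-path (so v is in no total mutual-visibility set). *)

From mathcomp Require Import all_boot zify.
From Stdlib Require Import Classical.
Set Implicit Arguments. Unset Strict Implicit. Unset Printing Implicit Defensive.

Lemma belast_split (S : eqType) (a v : S) (p : seq S) :
  v \in belast a p -> exists s1 w s2, a :: p = s1 ++ v :: w :: s2.
Proof.
elim: p a => [|b p IH] a //=; rewrite inE => /orP[/eqP->|/IH[s1 [w [s2 ->]]]].
  by exists [::], b, p.
by exists (a :: s1), w, s2.
Qed.

Section BlockGraphs.
Variables (T : finType) (e : rel T).
Hypothesis e_sym : symmetric e.
Hypothesis e_irr : irreflexive e.

Lemma induced_rel_sym (B : {set T}) : symmetric (induced_rel e B).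
Proof. by move=> x y; rewrite /induced_rel /= e_sym [(x \in B) && _]andbC. Qed.

Lemma connected_in_radius2 (A : {set T}) (r : T) : r \in A ->
  (forall x, x \in A -> exists2 y, y \in A & (y = r \/ e r y) /\ (x = y \/ e y x)) ->
  connected_in e A.
Proof.
move=> rA near.
have from_r x : x \in A -> connect (induced_rel e A) r x.
  move=> xA; have [y yA [ry yx]] := near x xA.
  apply: (@connect_trans _ _ y).
    case: ry => [->|ry]; first exact: connect0.
    by apply: connect1; rewrite /induced_rel /= ry rA.
  case: yx => [->|yx]; first exact: connect0.
  by apply: connect1; rewrite /induced_rel /= yx yA.
move=> x y xA yA; apply: (@connect_trans _ _ r); last exact: from_r.
by rewrite (sym_connect_sym (induced_rel_sym A)); exact: from_r.
Qed.

Lemma cycle4_set_rot (u v w a : T) : [set u; v; w; a] = [set v; w; a; u].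
Proof. by apply/setP => x; rewrite !inE; case: (x == u); rewrite ?orbT ?orbF. Qed.

Lemma cycle4_connected_minus (u v w a : T) :
  e v w -> e w a -> uniq [:: u; v; w; a] -> connected_in e ([set u; v; w; a] :\ u).
Proof.
move=> evw ewa; rewrite /= !inE !negb_or => /and4P[/and3P[nuv nuw nua] _ _ _].
have mem x : x \in [:: v; w; a] -> x \in [set u; v; w; a] :\ u.
  by rewrite !inE => /or3P[] /eqP->; rewrite eqxx ?orbT andbT eq_sym.
apply: (@connected_in_radius2 _ w); first by rewrite mem ?inE ?eqxx ?orbT.
move=> x; rewrite !inE => /andP[/negbTE-> /=] /orP[/orP[]|] /eqP->.
- by exists v; [rewrite mem ?inE ?eqxx | split; [right; rewrite e_sym | left]].
- by exists w; [rewrite mem ?inE ?eqxx ?orbT | split; left].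
- by exists a; [rewrite mem ?inE ?eqxx ?orbT | split; [right | left]].
Qed.

(* A 4-cycle u v w a (not necessarily induced) spans a nonseparable set; by
   rotation it suffices to delete its first vertex. *)
Lemma cycle4_nonseparable (u v w a : T) :
  e u v -> e v w -> e w a -> e a u -> uniq [:: u; v; w; a] ->
  nonseparable e [set u; v; w; a].
Proof.
move=> euv evw ewa eau uq.
have uq_rot k : uniq (rot k [:: u; v; w; a]) by rewrite rot_uniq.
have mem x : x \in [set u; v; w; a] = [|| x == u, x == v, x == w | x == a].
  by rewrite !inE -!orbA.
split; first by apply/set0Pn; exists u; rewrite mem eqxx.
split.
  apply: (@connected_in_radius2 _ u); first by rewrite mem eqxx.
  move=> x; rewrite mem => /or4P[] /eqP->.
  - by exists u; [rewrite mem eqxx | split; left].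
  - by exists v; [rewrite mem eqxx orbT | split; [right | left]].
  - by exists v; [rewrite mem eqxx orbT | split; right].
  - by exists a; [rewrite mem eqxx !orbT | split; [right; rewrite e_sym | left]].
move=> z; rewrite mem => /or4P[] /eqP->.
- exact: cycle4_connected_minus evw ewa uq.
- by rewrite cycle4_set_rot; exact: cycle4_connected_minus ewa eau (uq_rot 1).
- by do 2!rewrite cycle4_set_rot; exact: cycle4_connected_minus eau euv (uq_rot 2).
- by do 3!rewrite cycle4_set_rot; exact: cycle4_connected_minus euv evw (uq_rot 3).
Qed.

Lemma nonseparable_in_block (B : {set T}) :
  nonseparable e B -> exists2 C, is_block e C & B \subset C.
Proof.
have [n] := ubnP (#|T| - #|B|); elim: n B => // n IH B ltBn nsB.
have [blkB | not_blkB] := classic (is_block e B); first by exists B.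
have [B' [nsB' sBB' neB'B]] : exists B', [/\ nonseparable e B', B \subset B' & B' <> B].
  apply: NNPP => no_ext; apply: not_blkB; split=> // B' nsB' sBB'.
  by apply: NNPP => neB'B; apply: no_ext; exists B'.
have ltBB' : #|B| < #|B'|.
  by apply: proper_card; rewrite properEneq sBB' andbT; apply/eqP => /esym.
have [|C blkC sB'C] := IH B' _ nsB'.
  by have := subset_leq_card (subsetT B'); rewrite cardsT; lia.
by exists C => //; apply: subset_trans sBB' sB'C.
Qed.

Lemma closed_nbhd_sym (x y : T) : (x \in closed_nbhd e y) = (y \in closed_nbhd e x).
Proof. by rewrite !inE eq_sym e_sym. Qed.

Lemma simplicial_nbhd_clique (v : T) : simplicial e v -> is_clique e (closed_nbhd e v).
Proof.
move=> sv x y; rewrite !inE => /orP[/eqP->|evx] /orP[/eqP->|evy] nxy //.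
- by rewrite eqxx in nxy.
- by rewrite e_sym.
- by move/forallP/(_ x)/forallP/(_ y)/implyP: sv; apply; rewrite evx evy.
Qed.

Lemma not_simplicial_witness (v : T) :
  ~~ simplicial e v -> exists u w, [/\ e v u, e v w, u != w & ~~ e u w].
Proof.
move/forallPn=> [u /forallPn[w]]; rewrite negb_imply => /andP[/andP[/andP[evu evw] nuw]].
by exists u, w.
Qed.

(* If N[u] and N[w] meet exactly in {v} for u <> w, then v is not simplicial:
   otherwise u, w in N[v] are adjacent and both lie in N[u] :&: N[w]. *)
Lemma P_set_not_simplicial (v : T) : v \in P_set e -> ~~ simplicial e v.
Proof.
rewrite inE => /existsP[u /existsP[w /andP[nuw /eqP Nuw]]]; apply/negP => sv.
have only_v z : z \in closed_nbhd e u -> z \in closed_nbhd e w -> z = v.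
  by move=> zu zw; apply/set1P; rewrite -Nuw inE zu zw.
have /setIP[vu vw] : v \in closed_nbhd e u :&: closed_nbhd e w by rewrite Nuw set11.
have euw : e u w.
  by apply: (simplicial_nbhd_clique sv) nuw; rewrite closed_nbhd_sym.
have uv : u = v by apply: only_v; rewrite !inE ?eqxx // e_sym euw orbT.
have wv : w = v by apply: only_v; rewrite !inE ?eqxx ?euw ?orbT.
by move: nuw; rewrite uv wv eqxx.
Qed.

Lemma internal_split (x v : T) (p : seq T) :
  v \in internal x p -> exists s1 w s2, p = s1 ++ v :: w :: s2.
Proof. by case: p => [|b p]; [rewrite /internal /= in_nil | apply: belast_split]. Qed.

Lemma exists_shortest_path (x y : T) : connect e x y -> exists p, shortest_path e x y p.
Proof.
move=> /connectP[p pp lp]; have : walk e x y p by [].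
have [n] := ubnP (size p); elim: n p {pp lp} => // n IH p ltpn wp.
have [minp | ] := classic (forall q, walk e x y q -> size p <= size q); first by exists p.
move=> /not_all_ex_not[q] /(imply_to_and (walk e x y q))[wq /negP].
rewrite -ltnNge => ltqp.
by apply: (IH q) => //; apply: leq_trans ltqp ltpn.
Qed.

(* Internal vertices of shortest paths are not simplicial: their predecessor
   u and successor w are distinct and non-adjacent, else the path shortens. *)
Lemma shortest_path_internal_not_simplicial (x y v : T) (p : seq T) :
  shortest_path e x y p -> v \in internal x p -> ~~ simplicial e v.
Proof.
move=> [[pp lp] minp] /internal_split[s1 [w [s2 Ep]]]; subst p.
move: pp lp; rewrite cat_path last_cat /= => /and4P[ps1 euv evw pw] lp.
set u := last x s1 in euv.
have no_shortcut q : path e u q -> last u q = y -> size q < (size s2).+2 -> False.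
  move=> pq lq ltq; have := minp (s1 ++ q); rewrite !size_cat ltn_geF ?ltn_add2l //.
  move=> not_walk; suff /not_walk : walk e x y (s1 ++ q) by [].
  by split; rewrite ?cat_path ?last_cat ?ps1.
apply/forallPn; exists u; apply/forallPn; exists w; rewrite negb_imply e_sym euv evw /=.
apply/andP; split.
  by apply/eqP => uw; apply: (no_shortcut s2); rewrite ?uw // ltnW.
by apply/negP => euw; apply: (no_shortcut (w :: s2)); rewrite /= ?euw.
Qed.

Lemma simplicial_set_mutual_visibility :
  connected_graph e -> total_mutual_visibility_set e (simplicial_set e).
Proof.
move=> conn x y; have [p sp] := exists_shortest_path (conn x y).
exists p; split=> //; apply/allP => v vp; rewrite inE.
exact: shortest_path_internal_not_simplicial sp vp.
Qed.

Hypothesis e_block : block_graph e.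

Lemma nonseparable_clique (B : {set T}) : nonseparable e B -> is_clique e B.
Proof.
move=> /nonseparable_in_block [C /e_block clqC sBC] x y xB yB.
by apply: clqC; apply: (subsetP sBC).
Qed.

(* In a block graph two distinct non-adjacent vertices have at most one common
   neighbour: two of them would span a 4-cycle, hence a clique. *)
Lemma unique_common_neighbour (u v w a : T) :
  e u v -> e v w -> e u a -> e a w -> u != w -> ~~ e u w -> a = v.
Proof.
move=> euv evw eua eaw nuw not_euw; apply/eqP; apply: contraNT not_euw => nav.
have neq x y : e x y -> (x == y) = false by apply: contraTF => /eqP->; rewrite e_irr.
have uq : uniq [:: u; v; w; a].
  rewrite /= !inE (neq u v) // (neq v w) // (neq u a) // [w == a]eq_sym (neq a w) //.
  by rewrite (negbTE nuw) [v == a]eq_sym (negbTE nav).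
have ewa : e w a by rewrite e_sym.
have eau : e a u by rewrite e_sym.
have clq := nonseparable_clique (cycle4_nonseparable euv evw ewa eau uq).
by apply: clq nuw; rewrite !inE eqxx ?orbT.
Qed.

(* Conversely, in a block graph a non-simplicial v is the unique common
   neighbour of the ends of an induced path u v w, so v lies in P(G). *)
Lemma not_simplicial_P_set (v : T) : ~~ simplicial e v -> v \in P_set e.
Proof.
move=> /not_simplicial_witness[u [w [evu evw nuw not_euw]]].
rewrite inE; apply/existsP; exists u; apply/existsP; exists w; rewrite nuw /=.
apply/eqP/setP => z; rewrite !inE; apply/idP/eqP => [|->]; last first.
  by rewrite ![e _ v]e_sym evu evw !orbT.
case/andP => /orP[/eqP zu|euz] /orP[/eqP zw|ewz].
- by move: nuw; rewrite -zu zw eqxx.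
- by move: not_euw; rewrite e_sym -zu ewz.
- by move: not_euw; rewrite -zw euz.
- have euv : e u v by rewrite e_sym.
  have ezw : e z w by rewrite e_sym.
  exact: unique_common_neighbour euv evw euz ezw nuw not_euw.
Qed.

Lemma P_set_compl : P_set e = ~: simplicial_set e.
Proof.
apply/setP => v; rewrite in_setC [v \in simplicial_set e]inE.
by apply/idP/idP; [exact: P_set_not_simplicial | exact: not_simplicial_P_set].
Qed.

(* In a block graph every total mutual-visibility set consists of simplicial
   vertices: for an induced path u v w the only shortest u,w-path is u v w. *)
Lemma mutual_visibility_sub_simplicial (X : {set T}) :
  total_mutual_visibility_set e X -> X \subset simplicial_set e.
Proof.
move=> visX; apply/subsetP => v vX; rewrite inE.
apply: contraT => /not_simplicial_witness[u [w [evu evw nuw not_euw]]].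
have [p [[[pp lp] minp] outX]] := visX u w.
have euv : e u v by rewrite e_sym.
have : size p <= 2 by apply: (minp [:: v; w]); split; rewrite /= ?euv ?evw.
case: p pp lp outX {minp} => [|a [|b [|c q]]] //= => [_ uw | /andP[eua _] aw | ].
- by rewrite uw eqxx in nuw.
- by rewrite -aw eua in not_euw.
rewrite /internal /= !andbT => /andP[eua eab] bw.
by rewrite (unique_common_neighbour euv evw eua) ?vX // -bw.
Qed.

End BlockGraphs.

Theorem corollary3p4 (T : finType) (e : rel T) :
  simple_graph e -> connected_graph e -> block_graph e ->
  mu_t_is e #|simplicial_set e| /\
  #|simplicial_set e| = #|T| - #|P_set e|.
Proof.
move=> [e_sym e_irr] conn blk.
have visS := simplicial_set_mutual_visibility e_sym conn.
have subS := mutual_visibility_sub_simplicial e_sym e_irr blk.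
split; first split.
- by exists (simplicial_set e).
- by move=> X /subS /subset_leq_card.
by rewrite (P_set_compl e_sym e_irr blk) -(cardsC (simplicial_set e)) addnK.
Qed.
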